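(* Consider a batch contextual bandit with finite context (state) space $\mathcal{S}$, finite action space $\mathcal{A}$, context distribution $d_0\in\Delta(\mathcal{S})$ and reward distributions $R(s,a)\in\Delta([0,R_{\max}])$. Let $\pi_b$ be a behavior policy, $\mu:=d_0\times\pi_b$, and let $\mathcal{F}$ be a finite class of functions $\mathcal{S}\times\mathcal{A}\to[0,R_{\max}]$. Let $\hat f\in\mathcal{F}$ satisfy $\mathcal{L}_\mu(\hat f)-\min_{f\in\mathcal{F}}\mathcal{L}_\mu(f)\le\epsilon$. Assume (i) there is a constant $C<+\infty$ with $\pi_b(a\mid s)\ge 1/C$ for all $s\in\mathcal{S},a\in\mathcal{A}$, and (ii) $Q^\star\in\mathcal{F}$, where $Q^\star(s,a)=\mathbb{E}_{r\sim R(s,a)}[r]$. Then $$v^{\pi_{\hat f}}\ \ge\ v^\star-2\sqrt{C\epsilon}.$$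
   Context: The behavior policy $\pi_b:\mathcal{S}\to\Delta(\mathcal{A})$ generates data $s\sim d_0$, $a\sim\pi_b(\cdot\mid s)$, $r\sim R(s,a)$; $\mu$ is the resulting joint distribution of $(s,a)$. The population squared loss is $\mathcal{L}_\mu(f):=\mathbb{E}_{(s,a)\sim\mu,\,r\sim R(s,a)}[(f(s,a)-r)^2]$. For a function $f$, $\pi_f$ is its greedy policy $s\mapsto\arg\max_{a\in\mathcal{A}}f(s,a)$ (ties broken by a fixed rule). For a deterministic policy $\pi$, $v^\pi:=\mathbb{E}_{s\sim d_0,\,r\sim R(s,\pi(s))}[r]$, and $v^\star:=\mathbb{E}_{s\sim d_0}[\max_{a}Q^\star(s,a)]$ is the optimal value. *)

From HB Require Import structures.
From mathcomp Require Import all_boot all_order all_algebra.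
From mathcomp Require Import all_classical all_reals all_analysis.
Set Implicit Arguments. Unset Strict Implicit. Unset Printing Implicit Defensive.
Import Order.TTheory GRing.Theory Num.Theory.
Local Open Scope ring_scope.
Local Open Scope classical_set_scope.

Section Bandit.
Variables (R : realType) (S A : finType).

Definition is_dist (T : finType) (p : T -> R) : Prop :=
  (forall x, 0 <= p x) /\ \sum_(x : T) p x = 1.

Definition Qstar (Rd : S -> A -> probability R R) (s : S) (a : A) : R :=
  Rintegral (Rd s a) setT (fun r => r).

Definition sq_loss (d0 : S -> R) (pib : S -> A -> R)
    (Rd : S -> A -> probability R R) (f : S -> A -> R) : R :=
  \sum_(s : S) \sum_(a : A)
     d0 s * pib s a * Rintegral (Rd s a) setT (fun r => (f s a - r) ^+ 2).

Definition value (d0 : S -> R) (Rd : S -> A -> probability R R)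
    (pi : S -> A) : R :=
  \sum_(s : S) d0 s * Rintegral (Rd s (pi s)) setT (fun r => r).

(* optimal value v* = E_{s~d0}[max_a Q*(s,a)]; a0 only seeds the (nonempty) max *)
Definition vstar (d0 : S -> R) (Rd : S -> A -> probability R R) (a0 : A) : R :=
  \sum_(s : S) d0 s * \big[Num.max/Qstar Rd s a0]_(a : A) Qstar Rd s a.

Definition greedy (f : S -> A -> R) (pi : S -> A) : Prop :=
  forall s a, f s a <= f s (pi s).

End Bandit.

From HB Require Import structures.
From mathcomp Require Import all_boot all_order all_algebra.
From mathcomp Require Import all_classical all_reals all_analysis.
From mathcomp Require Import measurable_realfun ring lra.
Set Implicit Arguments. Unset Strict Implicit. Unset Printing Implicit Defensive.
Import Order.TTheory GRing.Theory Num.Theory.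
Local Open Scope ring_scope.
Local Open Scope classical_set_scope.

(* Since the mean reward [Qstar] minimises the squared loss pointwise, the excess loss
   of [fhat] over [Qstar] is the mu-weighted squared error
   sum_(s,a) d0 s * pib s a * (fhat s a - Qstar s a)^2 <= eps, and pib >= 1/C turns it
   into a d0-average of the unweighted errors err s = sum_a (fhat s a - Qstar s a)^2,
   bounded by C eps.  In each state, greediness of [pi_fhat] bounds the regret
   max_a Qstar s a - Qstar s (pi_fhat s) by 2 sqrt (err s), and Jensen's inequality for
   the square root yields v* - v^pi_fhat <= 2 sqrt (C eps). *)

Section SupportedProbability.
Variables (R : realType) (P : probability R R) (Rmax : R).
Hypothesis P_supp : P `[0, Rmax] = 1%E.

Lemma integrable_bounded_on_support (g : R -> R) (B : R) :
  measurable_fun setT g -> (forall x, 0 <= x <= Rmax -> `|g x| <= B) ->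
  P.-integrable setT (EFin \o g).
Proof.
move=> mg gB; have mI : measurable (`[0, Rmax] : set R) by [].
have P_out : P (~` `[0, Rmax]) = 0%E by rewrite probability_setC // P_supp subee.
rewrite (@negligible_integrable _ _ _ P setT _ (EFin \o g) (measurableC mI))
  //; last exact/measurable_EFinP.
rewrite setTD setCK; apply: measurable_bounded_integrable => //.
- by rewrite (le_lt_trans (probability_le1 P mI)) ?ltry.
- exact: measurable_funS mg.
- rewrite /bounded_near; near=> M => x /= Ix.
  apply: (le_trans (gB x _)); first by move: Ix; rewrite in_itv.
  by near: M; apply: nbhs_pinfty_ge; exact: num_real.
Unshelve. all: by end_near. Qed.

Lemma integrable_id : P.-integrable setT (EFin \o id).
Proof.
apply: (integrable_bounded_on_support (B := Rmax)); first exact: measurable_id.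
by move=> x /andP[x_ge0 x_le]; rewrite ger0_norm.
Qed.

Lemma integrable_sqr_loss (c : R) :
  P.-integrable setT (EFin \o (fun r => (c - r) ^+ 2)).
Proof.
apply: (integrable_bounded_on_support (B := (`|c| + Rmax) ^+ 2)).
  by apply: measurable_funX; apply: measurable_funB.
move=> x /andP[x_ge0 x_le]; have Rmax_ge0 := le_trans x_ge0 x_le.
rewrite normrX lerXn2r ?nnegrE ?addr_ge0 //.
by rewrite (le_trans (ler_normB _ _)) // lerD2l ger0_norm.
Qed.

(* Bias-variance decomposition: the mean is the constant predictor of least squared loss. *)
Lemma Rintegral_sqr_loss_sub_mean (c : R) :
  let m := Rintegral P setT id in
  Rintegral P setT (fun r => (c - r) ^+ 2)
    - Rintegral P setT (fun r => (m - r) ^+ 2) = (c - m) ^+ 2.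
Proof.
move=> m; rewrite -RintegralB //; [|exact: integrable_sqr_loss..].
have -> : (fun r => (c - r) ^+ 2 - (m - r) ^+ 2) =
          (fun r => (c ^+ 2 - m ^+ 2) - (2 * (c - m)) * id r).
  by apply/funext => r /=; ring.
rewrite RintegralB //; last first.
- exact: integrableZl integrable_id.
- exact: finite_measure_integrable_cst.
rewrite Rintegral_cst // RintegralZl //; last exact: integrable_id.
have -> : fine (P [set: R]) = 1 by rewrite probability_setT.
rewrite -/m; ring.
Qed.

End SupportedProbability.

Lemma sqr_sum_le_sum_sqr (R : realFieldType) (I : finType) (w y : I -> R) :
  (forall i, 0 <= w i) -> \sum_i w i = 1 ->
  (\sum_i w i * y i) ^+ 2 <= \sum_i w i * y i ^+ 2.
Proof.
move=> w_ge0 w_sum1; set m := \sum_i w i * y i.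
have var_ge0 : 0 <= \sum_i w i * (y i - m) ^+ 2.
  by apply: sumr_ge0 => i _; rewrite mulr_ge0 ?sqr_ge0.
have var_eq : \sum_i w i * (y i - m) ^+ 2 = \sum_i w i * y i ^+ 2 - m ^+ 2.
  rewrite (eq_bigr (fun i => w i * y i ^+ 2 - 2 * m * (w i * y i) + m ^+ 2 * w i));
    last by move=> i _; ring.
  by rewrite big_split sumrB /= -!mulr_sumr w_sum1 -/m; ring.
by rewrite -subr_ge0 -var_eq.
Qed.

Lemma sum_sqrt_le_sqrt_sum (R : rcfType) (I : finType) (w x : I -> R) :
  (forall i, 0 <= w i) -> \sum_i w i = 1 -> (forall i, 0 <= x i) ->
  \sum_i w i * Num.sqrt (x i) <= Num.sqrt (\sum_i w i * x i).
Proof.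
move=> w_ge0 w_sum1 x_ge0; rewrite (le_trans (ler_norm _)) // -sqrtr_sqr.
apply: ler_wsqrtr; apply: le_trans (sqr_sum_le_sum_sqr _ w_ge0 w_sum1) _.
by apply: ler_sum => i _; rewrite sqr_sqrtr.
Qed.

Lemma normr_le_sqrt_sum_sqr (R : rcfType) (I : finType) (g : I -> R) (j : I) :
  `|g j| <= Num.sqrt (\sum_i g i ^+ 2).
Proof.
rewrite -sqrtr_sqr ler_wsqrtr // (bigD1 j) //= lerDl.
by apply: sumr_ge0 => i _; rewrite sqr_ge0.
Qed.

(* [q a - q b <= (q a - f a) + (f b - q b)] because [f a <= f b]. *)
Lemma bigmax_sub_greedy_le (R : rcfType) (A : finType) (f q : A -> R) (a0 b : A) :
  (forall a, f a <= f b) ->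
  \big[Num.max/q a0]_a q a - q b <= 2 * Num.sqrt (\sum_a (f a - q a) ^+ 2).
Proof.
move=> b_greedy; set e := Num.sqrt _.
have q_le a : q a <= q b + 2 * e.
  have err_a := normr_le_sqrt_sum_sqr (fun a => f a - q a) a.
  have err_b := normr_le_sqrt_sum_sqr (fun a => f a - q a) b.
  have := ler_norm (f b - q b); have := ler_norm (- (f a - q a)).
  rewrite normrN -/e in err_a err_b *; have := b_greedy a; lra.
by rewrite lerBlDl; apply/bigmax_leP; split => // a _; apply: q_le.
Qed.

Lemma ler_sum_coverage (R : realFieldType) (S A : finType) (d : S -> R)
    (p g : S -> A -> R) (C : R) :
  (forall s, 0 <= d s) -> (forall s a, 0 <= g s a) ->
  0 < C -> (forall s a, C^-1 <= p s a) ->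
  \sum_s d s * \sum_a g s a <= C * \sum_s \sum_a d s * p s a * g s a.
Proof.
move=> d_ge0 g_ge0 C_gt0 p_ge; rewrite mulr_sumr; apply: ler_sum => s _.
rewrite !mulr_sumr; apply: ler_sum => a _.
have Cp_ge1 : 1 <= C * p s a.
  by rewrite -(mulfV (lt0r_neq0 C_gt0)) ler_pM2l.
rewrite [leRHS](_ : _ = d s * g s a * (C * p s a)); last by ring.
by rewrite ler_peMr ?mulr_ge0.
Qed.

Lemma sq_loss_sub_Qstar (R : realType) (S A : finType) (d0 : S -> R)
    (pib : S -> A -> R) (Rd : S -> A -> probability R R) (Rmax : R)
    (f : S -> A -> R) :
  (forall s a, Rd s a `[0, Rmax] = 1%E) ->
  sq_loss d0 pib Rd f - sq_loss d0 pib Rd (Qstar Rd)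
    = \sum_s \sum_a d0 s * pib s a * (f s a - Qstar Rd s a) ^+ 2.
Proof.
move=> Rd_supp; rewrite /sq_loss -sumrB; apply: eq_bigr => s _.
rewrite -sumrB; apply: eq_bigr => a _.
by rewrite -mulrBr (Rintegral_sqr_loss_sub_mean (Rd_supp s a)).
Qed.

Theorem theorem1 (R : realType) (S A : finType) (a0 : A)
  (d0 : S -> R) (pib : S -> A -> R) (Rd : S -> A -> probability R R)
  (Rmax : R) (F : set (S -> A -> R)) (fhat : S -> A -> R) (eps C : R)
  (pi_fhat : S -> A) :
  is_dist d0 ->
  (forall s, is_dist (pib s)) ->
  (forall s a, Rd s a `[0, Rmax] = 1%E) ->
  finite_set F ->
  (forall f, F f -> forall s a, 0 <= f s a <= Rmax) ->
  F fhat ->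
  (forall f, F f -> sq_loss d0 pib Rd fhat - sq_loss d0 pib Rd f <= eps) ->
  0 < C ->
  (forall s a, C^-1 <= pib s a) ->
  F (Qstar Rd) ->
  greedy fhat pi_fhat ->
  value d0 Rd pi_fhat >= vstar d0 Rd a0 - 2 * Num.sqrt (C * eps).
Proof.
move=> [d0_ge0 d0_sum1] _ Rd_supp _ _ _ fhat_opt C_gt0 pib_ge Qstar_in greedy_pi.
pose err s := \sum_a (fhat s a - Qstar Rd s a) ^+ 2.
have err_ge0 s : 0 <= err s by apply: sumr_ge0 => a _; rewrite sqr_ge0.
have regret_le : vstar d0 Rd a0 - value d0 Rd pi_fhat
    <= 2 * \sum_s d0 s * Num.sqrt (err s).
  rewrite /vstar /value -sumrB mulr_sumr; apply: ler_sum => s _.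
  rewrite -mulrBr mulrCA ler_wpM2l //; exact: bigmax_sub_greedy_le (greedy_pi s).
have err_le : \sum_s d0 s * err s <= C * eps.
  apply: le_trans (ler_sum_coverage _ _ C_gt0 pib_ge) _ => //.
    by move=> s a; rewrite sqr_ge0.
  by rewrite ler_pM2l // -(sq_loss_sub_Qstar _ _ fhat Rd_supp) fhat_opt.
have avg_err_le : \sum_s d0 s * Num.sqrt (err s) <= Num.sqrt (C * eps).
  exact: le_trans (sum_sqrt_le_sqrt_sum d0_ge0 d0_sum1 err_ge0) (ler_wsqrtr err_le).
by rewrite lerBlDr -lerBlDl (le_trans regret_le) // ler_wpM2l.
Qed.
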